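(* Let $K\ge0$, $N\in[n,\infty)$ with $n\ge 2$, $R>0$, and set $\alpha:=N\,\mathcal H(2\sqrt{K/N}\,R)$, where $\mathcal H(t)=t\coth t$ (with $\mathcal H(0)=1$); in particular $\alpha\ge2$. Then there exists a function $h:[0,\infty)\to\mathbb R$ such that: (i) $h\in C^2[0,\infty)$ and $h'(0)=0$; (ii) $\inf_{[0,\infty)}h\ge-\alpha^2 18^\alpha$; (iii) for $t>1/18$: $h''(t)-\frac{h'(t)}t=-\alpha(\alpha+2)t^{-(\alpha+2)}<0$ and $\frac{h'(t)}t=\alpha t^{-(\alpha+2)}>0$; for $0<t\le1/18$: $\big|h''(t)-\frac{h'(t)}t\big|\le 972\,\alpha^2 18^\alpha$ and $0<\frac{h'(t)}t\le 972\,\alpha^2 18^\alpha$. *)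

From Stdlib Require Import Reals.
From Coquelicot Require Import Coquelicot.
Open Scope R_scope.

Definition Hcoth (t : R) : R :=
  if Req_EM_T t 0 then 1 else t * cosh t / sinh t.

Definition deriv_on_nonneg (f : R -> R) (x d : R) : Prop :=
  filterlim (fun y => (f y - f x) / (y - x))
            (within (fun y => 0 <= y /\ y <> x) (locally x)) (locally d).

Definition cont_on_nonneg (f : R -> R) (x : R) : Prop :=
  filterlim f (within (fun y => 0 <= y) (locally x)) (locally (f x)).

Definition C2_nonneg (h h1 h2 : R -> R) : Prop :=
  (forall x, 0 <= x -> deriv_on_nonneg h x (h1 x)) /\
  (forall x, 0 <= x -> deriv_on_nonneg h1 x (h2 x)) /\
  (forall x, 0 <= x -> cont_on_nonneg h2 x).

(** The function is glued at [c = 1/18] from a cubic polynomial on [[0, c]]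
    and the tail [C - t^(-alpha)] on [[c, oo)].  On the tail, [h'(t)/t] and
    [h'' - h'/t] are exactly the powers of [t] required in (iii).  On [[0, c]]
    one takes [h'(t) = t (A - B (t - c))]: [h'/t] is then affine, and the two
    coefficients [A], [B] are the unique ones matching [h'] and [h''] with the
    tail at [c], which makes the glued function [C^2].  Since [B >= 0], [h'/t]
    is positive and decreasing on [[0, c]], and both quantities in (iii) are
    bounded there by their values at [t = 0] and [t = c]; finally [h >= 0]
    everywhere, which is stronger than (ii). *)

From Stdlib Require Import Reals Lra.
From Coquelicot Require Import Coquelicot.
Open Scope R_scope.

Lemma filterlim_either {T : Type} {U : UniformSpace} {F : (T -> Prop) -> Prop}
  {FF : Filter F} (u v w : T -> U) (l : U) :
  F (fun y => u y = v y \/ u y = w y) ->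
  filterlim v F (locally l) -> filterlim w F (locally l) ->
  filterlim u F (locally l).
Proof.
  intros Huvw Hv Hw. apply filterlim_locally. intros eps.
  apply filterlim_locally with (eps := eps) in Hv.
  apply filterlim_locally with (eps := eps) in Hw.
  generalize (filter_and _ _ Huvw (filter_and _ _ Hv Hw)).
  apply filter_imp. intros y [[E|E] [Bv Bw]]; rewrite E; assumption.
Qed.

Lemma deriv_on_nonneg_of_is_derive (f : R -> R) (x d : R) :
  is_derive f x d -> deriv_on_nonneg f x d.
Proof.
  intros Hd. apply is_derive_Reals in Hd.
  apply filterlim_locally. intros eps.
  destruct (Hd eps (cond_pos eps)) as [del Hdel].
  exists del. intros y Hy [_ Hyx]. simpl in *.
  specialize (Hdel (y - x) ltac:(lra) Hy).
  replace (x + (y - x)) with y in Hdel by ring. exact Hdel.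
Qed.

Lemma cont_on_nonneg_of_continuous (f : R -> R) (x : R) :
  continuous f x -> cont_on_nonneg f x.
Proof. apply filterlim_filter_le_1, filter_le_within. Qed.

Definition splice (c : R) (f g : R -> R) (y : R) : R :=
  if Rle_dec y c then f y else g y.

Lemma splice_left_near (c x : R) (f g : R -> R) :
  x < c -> locally x (fun y => splice c f g y = f y).
Proof.
  intros Hx. exists (mkposreal (c - x) ltac:(lra)). intros y Hy.
  change (Rabs (y - x) < c - x) in Hy. apply Rabs_def2 in Hy.
  unfold splice. destruct (Rle_dec y c); [reflexivity | lra].
Qed.

Lemma splice_right_near (c x : R) (f g : R -> R) :
  c < x -> locally x (fun y => splice c f g y = g y).
Proof.
  intros Hx. exists (mkposreal (x - c) ltac:(lra)). intros y Hy.
  change (Rabs (y - x) < x - c) in Hy. apply Rabs_def2 in Hy.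
  unfold splice. destruct (Rle_dec y c); [lra | reflexivity].
Qed.

Lemma deriv_on_nonneg_ext_loc (f g : R -> R) (x d : R) :
  locally x (fun y => f y = g y) -> deriv_on_nonneg g x d -> deriv_on_nonneg f x d.
Proof.
  intros Efg. unfold deriv_on_nonneg.
  rewrite (locally_singleton _ _ Efg). apply filterlim_ext_loc, filter_le_within.
  generalize Efg. apply filter_imp. intros y E. rewrite E. reflexivity.
Qed.

Lemma cont_on_nonneg_ext_loc (f g : R -> R) (x : R) :
  locally x (fun y => f y = g y) -> cont_on_nonneg g x -> cont_on_nonneg f x.
Proof.
  intros Efg. unfold cont_on_nonneg.
  rewrite (locally_singleton _ _ Efg). apply filterlim_ext_loc, filter_le_within.
  generalize Efg. apply filter_imp. intros y E. rewrite E. reflexivity.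
Qed.

Lemma deriv_on_nonneg_splice (c : R) (f g f' g' : R -> R) (x : R) :
  0 < c -> f c = g c -> f' c = g' c ->
  (forall y, is_derive f y (f' y)) -> (forall y, 0 < y -> is_derive g y (g' y)) ->
  deriv_on_nonneg (splice c f g) x (splice c f' g' x).
Proof.
  intros c_pos f_g_c f'_g'_c f_deriv g_deriv. unfold splice at 2.
  destruct (Rtotal_order x c) as [Hx | [-> | Hx]].
  - destruct (Rle_dec x c); [|lra].
    apply (deriv_on_nonneg_ext_loc _ f); [exact (splice_left_near c x f g Hx) |].
    apply deriv_on_nonneg_of_is_derive, f_deriv.
  - destruct (Rle_dec c c); [|lra].
    apply (filterlim_either _ (fun y => (f y - f c) / (y - c))
                               (fun y => (g y - g c) / (y - c))).
    + apply filter_forall. intros y. unfold splice.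
      destruct (Rle_dec c c); [|lra].
      destruct (Rle_dec y c); [left | right; rewrite f_g_c]; reflexivity.
    + apply deriv_on_nonneg_of_is_derive, f_deriv.
    + rewrite f'_g'_c. apply deriv_on_nonneg_of_is_derive, g_deriv, c_pos.
  - destruct (Rle_dec x c); [lra|].
    apply (deriv_on_nonneg_ext_loc _ g); [exact (splice_right_near c x f g Hx) |].
    apply deriv_on_nonneg_of_is_derive, g_deriv. lra.
Qed.

Lemma cont_on_nonneg_splice (c : R) (f g : R -> R) (x : R) :
  0 < c -> f c = g c ->
  (forall y, continuous f y) -> (forall y, 0 < y -> continuous g y) ->
  cont_on_nonneg (splice c f g) x.
Proof.
  intros c_pos f_g_c f_cont g_cont.
  destruct (Rtotal_order x c) as [Hx | [-> | Hx]].
  - apply (cont_on_nonneg_ext_loc _ f); [exact (splice_left_near c x f g Hx) |].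
    apply cont_on_nonneg_of_continuous, f_cont.
  - apply (filterlim_either _ f g).
    + apply filter_forall. intros y. unfold splice.
      destruct (Rle_dec y c); [left | right]; reflexivity.
    + unfold splice. destruct (Rle_dec c c); [|lra].
      apply cont_on_nonneg_of_continuous, f_cont.
    + unfold splice. destruct (Rle_dec c c); [|lra]. rewrite f_g_c.
      apply cont_on_nonneg_of_continuous, g_cont, c_pos.
  - apply (cont_on_nonneg_ext_loc _ g); [exact (splice_right_near c x f g Hx) |].
    apply cont_on_nonneg_of_continuous, g_cont. lra.
Qed.

Lemma Rpower_add_1 (x e : R) : 0 < x -> Rpower x (e + 1) = x * Rpower x e.
Proof. intros Hx. rewrite Rpower_plus, Rpower_1 by exact Hx. ring. Qed.

Lemma Rpower_pos (x e : R) : 0 < Rpower x e.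
Proof. apply exp_pos. Qed.

Lemma Rle_Rpower_opp_l (s t e : R) : 0 <= e -> 0 < s <= t -> Rpower t (- e) <= Rpower s (- e).
Proof.
  intros He Hst. rewrite !Rpower_Ropp.
  apply Rinv_le_contravar; [apply Rpower_pos | apply Rle_Rpower_l; assumption].
Qed.

Lemma is_derive_Rpower (e y : R) : 0 < y ->
  is_derive (fun t => Rpower t e) y (e * Rpower y (e - 1)).
Proof. intros Hy. apply is_derive_Reals, derivable_pt_lim_power, Hy. Qed.

Section Profile.

Variables a c : R.

Definition core_slope : R := a * Rpower c (- (a + 2)).
Definition core_curv : R := a * (a + 2) * Rpower c (- (a + 3)).

Definition core (t : R) : R :=
  (core_slope + core_curv * c) * t ^ 2 / 2 - core_curv * t ^ 3 / 3.
Definition core' (t : R) : R := t * (core_slope - core_curv * (t - c)).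
Definition core'' (t : R) : R := core_slope - core_curv * (2 * t - c).

Definition tail (t : R) : R := core c + Rpower c (- a) - Rpower t (- a).
Definition tail' (t : R) : R := a * Rpower t (- (a + 1)).
Definition tail'' (t : R) : R := - a * (a + 1) * Rpower t (- (a + 2)).

Definition profile := splice c core tail.
Definition profile' := splice c core' tail'.
Definition profile'' := splice c core'' tail''.

Hypotheses (a_pos : 0 < a) (c_pos : 0 < c).

Lemma core'_tail'_c : core' c = tail' c.
Proof.
  unfold core', tail', core_slope.
  replace (- (a + 1)) with (- (a + 2) + 1) by ring.
  rewrite Rpower_add_1 by exact c_pos. ring.
Qed.

Lemma core''_tail''_c : core'' c = tail'' c.
Proof.
  unfold core'', tail'', core_slope, core_curv.
  replace (- (a + 2)) with (- (a + 3) + 1) by ring.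
  rewrite Rpower_add_1 by exact c_pos. ring.
Qed.

Lemma is_derive_tail (y : R) : 0 < y -> is_derive tail y (tail' y).
Proof.
  intros Hy.
  pose proof (is_derive_minus _ _ y _ _ (is_derive_const (core c + Rpower c (- a)) y)
                (is_derive_Rpower (- a) y Hy)) as Hd.
  replace (tail' y) with (minus (@zero R_AbelianGroup) (- a * Rpower y (- a - 1))).
  - exact Hd.
  - unfold tail', minus, plus, opp, zero; simpl.
    replace (- a - 1) with (- (a + 1)) by ring. ring.
Qed.

Lemma is_derive_tail' (y : R) : 0 < y -> is_derive tail' y (tail'' y).
Proof.
  intros Hy. unfold tail''.
  replace (- a * (a + 1) * Rpower y (- (a + 2)))
    with (a * (- (a + 1) * Rpower y (- (a + 1) - 1)))
    by (replace (- (a + 1) - 1) with (- (a + 2)) by ring; ring).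
  apply is_derive_scal, is_derive_Rpower, Hy.
Qed.

Lemma profile_C2 : C2_nonneg profile profile' profile''.
Proof.
  split; [| split]; intros x _.
  - apply deriv_on_nonneg_splice; [exact c_pos | | | |].
    + unfold tail. ring.
    + exact core'_tail'_c.
    + intros y. unfold core, core'. auto_derive; [exact I | field].
    + exact is_derive_tail.
  - apply deriv_on_nonneg_splice; [exact c_pos | | | |].
    + exact core'_tail'_c.
    + exact core''_tail''_c.
    + intros y. unfold core', core''. auto_derive; [exact I | ring].
    + exact is_derive_tail'.
  - apply cont_on_nonneg_splice; [exact c_pos | | |].
    + exact core''_tail''_c.
    + intros y. apply (ex_derive_continuous (V := R_NormedModule)).
      unfold core''. auto_derive. exact I.
    + intros y Hy. apply (ex_derive_continuous (V := R_NormedModule)).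
      unfold tail''. eexists. apply is_derive_scal, is_derive_Rpower, Hy.
Qed.

Lemma profile'_0 : profile' 0 = 0.
Proof.
  unfold profile', splice. destruct (Rle_dec 0 c); [unfold core'; ring | lra].
Qed.

Lemma core_slope_pos : 0 < core_slope.
Proof. apply Rmult_lt_0_compat; [exact a_pos | apply Rpower_pos]. Qed.

Lemma core_curv_pos : 0 < core_curv.
Proof.
  apply Rmult_lt_0_compat; [apply Rmult_lt_0_compat; lra | apply Rpower_pos].
Qed.

Lemma core_curv_mul_c : core_curv * c = a * (a + 2) * Rpower c (- (a + 2)).
Proof.
  unfold core_curv. replace (- (a + 2)) with (- (a + 3) + 1) by ring.
  rewrite Rpower_add_1 by exact c_pos. ring.
Qed.

Lemma core_nonneg (t : R) : 0 <= t <= c -> 0 <= core t.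
Proof.
  intros Ht. pose proof core_slope_pos. pose proof core_curv_pos.
  replace (core t) with
    (t ^ 2 * (core_slope / 2 + core_curv * c / 6 + core_curv * (c - t) / 3))
    by (unfold core; field).
  apply Rmult_le_pos; [apply pow2_ge_0 |].
  assert (0 <= core_curv * (c - t)) by (apply Rmult_le_pos; lra).
  assert (0 <= core_curv * c) by (apply Rmult_le_pos; lra).
  lra.
Qed.

Lemma profile_nonneg (t : R) : 0 <= t -> 0 <= profile t.
Proof.
  intros Ht. unfold profile, splice. destruct (Rle_dec t c).
  - apply core_nonneg. lra.
  - unfold tail. pose proof (core_nonneg c ltac:(lra)).
    pose proof (Rle_Rpower_opp_l c t a ltac:(lra) ltac:(lra)). lra.
Qed.

Lemma tail_ratios (t : R) : c < t ->
  profile' t / t = a * Rpower t (- (a + 2)) /\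
  profile'' t - profile' t / t = - a * (a + 2) * Rpower t (- (a + 2)).
Proof.
  intros Ht. unfold profile', profile'', splice.
  destruct (Rle_dec t c); [lra |].
  assert (E : tail' t / t = a * Rpower t (- (a + 2))).
  { unfold tail'. replace (- (a + 1)) with (- (a + 2) + 1) by ring.
    rewrite Rpower_add_1 by lra. field. lra. }
  rewrite E. split; [reflexivity |]. unfold tail''. ring.
Qed.

Lemma core_ratio_bounds (t : R) : 0 < t <= c ->
  Rabs (profile'' t - profile' t / t) <= a * (a + 2) * Rpower c (- (a + 2)) /\
  core_slope <= profile' t / t <= a * (a + 3) * Rpower c (- (a + 2)).
Proof.
  intros Ht. unfold profile', profile'', splice.
  destruct (Rle_dec t c); [| lra].
  assert (E : core' t / t = core_slope - core_curv * (t - c)) by (unfold core'; field; lra).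
  replace (core'' t - core' t / t) with (- (core_curv * t)) by (rewrite E; unfold core''; ring).
  replace (a * (a + 3) * Rpower c (- (a + 2))) with (core_slope + core_curv * c)
    by (rewrite core_curv_mul_c; unfold core_slope; ring).
  rewrite E, Rabs_Ropp, Rabs_pos_eq, <- core_curv_mul_c.
  - pose proof core_curv_pos.
    assert (core_curv * t <= core_curv * c) by (apply Rmult_le_compat_l; lra).
    assert (0 <= core_curv * (c - t)) by (apply Rmult_le_pos; lra).
    assert (0 <= core_curv * t) by (apply Rmult_le_pos; lra).
    lra.
  - pose proof core_curv_pos. apply Rmult_le_pos; lra.
Qed.

End Profile.

Lemma sinh_le_mul_cosh (t : R) : 0 <= t -> sinh t <= t * cosh t.
Proof.
  intros Ht. destruct (Req_dec t 0) as [-> | Ht0]; [rewrite sinh_0; lra |].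
  destruct (MVT_cor2 (fun s => s * cosh s - sinh s) (fun s => s * sinh s) 0 t
              ltac:(lra)) as [s [Hs Hst]].
  - intros s _.
    replace (s * sinh s) with ((1 * cosh s + s * sinh s) - cosh s) by ring.
    apply (derivable_pt_lim_minus (fun s => s * cosh s)).
    + apply (derivable_pt_lim_mult id). apply derivable_pt_lim_id. apply derivable_pt_lim_cosh.
    + apply derivable_pt_lim_sinh.
  - rewrite sinh_0, cosh_0 in Hs.
    assert (0 < sinh s) by (rewrite <- sinh_0; apply sinh_lt; lra).
    assert (0 <= s * sinh s * (t - 0)) by (apply Rmult_le_pos; [apply Rmult_le_pos |]; lra).
    lra.
Qed.

Lemma Hcoth_ge_1 (t : R) : 0 <= t -> 1 <= Hcoth t.
Proof.
  intros Ht. unfold Hcoth. destruct (Req_EM_T t 0) as [_ | Ht0]; [lra |].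
  assert (0 < sinh t) by (rewrite <- sinh_0; apply sinh_lt; lra).
  apply Rmult_le_reg_r with (sinh t); [assumption |].
  replace (t * cosh t / sinh t * sinh t) with (t * cosh t) by (field; lra).
  rewrite Rmult_1_l. apply sinh_le_mul_cosh, Ht.
Qed.

Lemma Rpower_inv18_opp (e : R) : Rpower (1 / 18) (- (e + 2)) = 324 * Rpower 18 e.
Proof.
  replace (Rpower (1 / 18) (- (e + 2))) with (Rpower 18 (e + 1 + 1)).
  - rewrite !Rpower_add_1 by lra. ring.
  - unfold Rpower. f_equal. replace (1 / 18) with (/ 18) by field.
    rewrite ln_Rinv by lra. ring.
Qed.

Theorem lemma6p1 (K N Rad : R) (n : nat)
  (hK : 0 <= K) (hn : (2 <= n)%nat) (hN : INR n <= N) (hR : 0 < Rad) :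
  let alpha := N * Hcoth (2 * sqrt (K / N) * Rad) in
  exists h h1 h2 : R -> R,
    C2_nonneg h h1 h2 /\ h1 0 = 0 /\
    (forall t, 0 <= t -> h t >= - (alpha ^ 2 * Rpower 18 alpha)) /\
    (forall t, 1 / 18 < t ->
       h2 t - h1 t / t = - alpha * (alpha + 2) * Rpower t (- (alpha + 2)) /\
       - alpha * (alpha + 2) * Rpower t (- (alpha + 2)) < 0 /\
       h1 t / t = alpha * Rpower t (- (alpha + 2)) /\
       alpha * Rpower t (- (alpha + 2)) > 0) /\
    (forall t, 0 < t <= 1 / 18 ->
       Rabs (h2 t - h1 t / t) <= 972 * alpha ^ 2 * Rpower 18 alpha /\
       0 < h1 t / t /\ h1 t / t <= 972 * alpha ^ 2 * Rpower 18 alpha).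
Proof.
  intros a.
  assert (a_ge_2 : 2 <= a).
  { pose proof (le_INR 2 n hn) as two_le_n. simpl in two_le_n.
    pose proof (sqrt_pos (K / N)).
    pose proof (Hcoth_ge_1 (2 * sqrt (K / N) * Rad)
                  ltac:(apply Rmult_le_pos; lra)).
    unfold a. nra. }
  pose proof (Rpower_pos 18 a) as P_pos.
  exists (profile a (1 / 18)), (profile' a (1 / 18)), (profile'' a (1 / 18)).
  split; [| split; [| split; [| split]]].
  - apply profile_C2; lra.
  - apply profile'_0. lra.
  - intros t Ht. pose proof (profile_nonneg a (1 / 18) ltac:(lra) ltac:(lra) t Ht).
    pose proof (Rmult_le_pos _ _ (pow2_ge_0 a) (Rlt_le _ _ P_pos)). lra.
  - intros t Ht. destruct (tail_ratios a (1 / 18) ltac:(lra) t Ht) as [E1 E2].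
    pose proof (Rpower_pos t (- (a + 2))).
    rewrite E2, E1. repeat split; [nra | nra].
  - intros t Ht. destruct (core_ratio_bounds a (1 / 18) ltac:(lra) ltac:(lra) t Ht)
      as [B1 [B2 B3]].
    pose proof (core_slope_pos a (1 / 18) ltac:(lra)).
    rewrite Rpower_inv18_opp in B1, B3.
    repeat split; [| lra |]; nra.
Qed.
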